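(* Let $n\ge1$ and let $\lambda$ be a partition of $n$. The state-space complexity of $\mathcal{L}(\lambda)$ is at most $n+1$ and that of $\mathcal{D}(\lambda)$ is at most $n$ (both attained for $\lambda=(n)$). Moreover there is an absolute constant $C>0$ such that the state-space complexity of each of $\mathcal{L}(\lambda)$ and $\mathcal{D}(\lambda)$ is at least $C\sqrt{n}$.
   Context: A partition of $n$ is a non-increasing sequence $\lambda=(\lambda_1,\dots,\lambda_r)$ of positive integers with sum $n$; $()$ is the empty partition. For non-negative $i,j$, $\lambda[i,j]$ is $(\lambda_{i+1}-j,\dots,\lambda_r-j)$ with all non-positive entries removed. LCTR: positions $\mathcal{L}(\mu)$; if $\mu\neq()$ the two moves go to $\mathcal{L}(\mu[1,0])$ and $\mathcal{L}(\mu[0,1])$; $\mathcal{L}(())$ is terminal. Downright: positions $\mathcal{D}(\mu)$, $\mu$ nonempty with $s$ parts; a move to $\mathcal{D}(\mu[1,0])$ exists iff $s>1$, a move to $\mathcal{D}(\mu[0,1])$ exists iff $\mu_1>1$. The game tree of a position $p$ is the rooted tree with root $p$ in which each move gives a child, the root of the game tree of the resulting position. Two positions are called distinct if their game trees are not isomorphic as rooted trees. The state-space complexity of a game started at $p$ is the number of pairwise distinct positions reachable from $p$ by zero or more moves. *)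

From Stdlib Require Import List Permutation Relations Reals.
From mathcomp Require Import all_boot.
Set Implicit Arguments. Unset Strict Implicit. Unset Printing Implicit Defensive.

Definition is_partition (n : nat) (l : seq nat) : bool :=
  [&& sorted (fun x y => y <= x) l, all (fun x => 0 < x) l & sumn l == n].

(* lambda[i,j] = (lambda_{i+1}-j, ..., lambda_r - j) with non-positive entries removed *)
Definition psh (i j : nat) (l : seq nat) : seq nat :=
  filter (fun x => 0 < x) (map (fun x => x - j) (drop i l)).

(* A game is given by its move function: list (with multiplicity) of successor positions. *)
Definition game := seq nat -> seq (seq nat).

Definition lctr_moves : game := fun mu =>
  if mu is [::] then [::] else [:: psh 1 0 mu; psh 0 1 mu].

Definition downright_moves : game := fun mu =>
  (if 1 < size mu then [:: psh 1 0 mu] else [::]) ++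
  (if 1 < head 0 mu then [:: psh 0 1 mu] else [::]).

(* Rooted trees with unordered children (children stored as a list). *)
Inductive gtree : Type := Node : list gtree -> gtree.

Inductive tiso : gtree -> gtree -> Prop :=
| tiso_node : forall (s1 s2 s2' : list gtree),
    Permutation s2 s2' -> Forall2 tiso s1 s2' -> tiso (Node s1) (Node s2).

Inductive game_tree (g : game) : seq nat -> gtree -> Prop :=
| gt_node : forall p ts, Forall2 (game_tree g) (g p) ts -> game_tree g p (Node ts).

Definition distinct_pos (g : game) (p q : seq nat) : Prop :=
  exists tp tq, game_tree g p tp /\ game_tree g q tq /\ ~ tiso tp tq.

Definition step (g : game) (p q : seq nat) : Prop := q \in g p.
Definition reachable (g : game) (p q : seq nat) : Prop := clos_refl_trans _ (step g) p q.

Definition distinct_family (g : game) (p : seq nat) (s : seq (seq nat)) : Prop :=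
  (forall q, q \in s -> reachable g p q) /\
  (forall i j, i < j -> j < size s -> distinct_pos g (nth [::] s i) (nth [::] s j)).

Definition ssc_le (g : game) (p : seq nat) (k : nat) : Prop :=
  forall s, distinct_family g p s -> size s <= k.
Definition ssc_ge (g : game) (p : seq nat) (k : nat) : Prop :=
  exists s, distinct_family g p s /\ k <= size s.

(* Every position reachable from L(lam) or D(lam) is a shifted partition lam[i,j], which is
   empty unless (i,j) is a cell of the Young diagram of lam; hence there are at most n + 1
   distinct positions, and at most n for Downright, which never reaches the empty position.
   Conversely, game trees get strictly shorter along every move, so the positions of a play are
   pairwise distinct.  The plays through lam[0,t] and through lam[t,0] are as long as the first
   row and the first column of the diagram, and the longer of the two has length at least
   sqrt n since n <= (number of rows) * (length of the first row). *)

From Stdlib Require Import Reals List Permutation Relations Lia.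
From mathcomp Require Import all_boot zify.
Set Implicit Arguments. Unset Strict Implicit. Unset Printing Implicit Defensive.

Definition gtree_forall_ind (P : gtree -> Prop)
    (IH : forall ts, Forall P ts -> P (Node ts)) : forall t, P t :=
  fix ind t := let: Node ts := t in
    IH ts ((fix ind_all ts : Forall P ts :=
              match ts with
              | [::] => Forall_nil P
              | t :: ts' => Forall_cons t (ind t) (ind_all ts')
              end) ts).

Lemma tiso_refl t : tiso t t.
Proof.
elim/gtree_forall_ind: t => ts IH; apply: tiso_node (Permutation_refl ts) _.
by elim: IH => // *; constructor.
Qed.

Fixpoint height (t : gtree) : nat :=
  let: Node ts := t in (foldr maxn 0 (map height ts)).+1.

Lemma height_child c ts : In c ts -> height c < height (Node ts).
Proof. elim: ts => //= t ts IH [->|/IH]; lia. Qed.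

Lemma height_Permutation ts ts' :
  Permutation ts ts' -> height (Node ts) = height (Node ts').
Proof. by elim=> /= *; lia. Qed.

Lemma tiso_height t1 t2 : tiso t1 t2 -> height t1 = height t2.
Proof.
elim/gtree_forall_ind: t1 t2 => ts1 IH t2 hiso.
inversion hiso as [? ts2 ts2' hperm hchildren]; subst.
rewrite (height_Permutation hperm) /=; congr (foldr _ _ _).+1.
elim: hchildren IH => //= t1 t2 s1 s2 h12 _ IHs /Forall_cons_iff[h1 /IHs ->].
by rewrite (h1 _ h12).
Qed.

Lemma Forall2_functional (A B : Type) (R : A -> B -> Prop) l bs1 bs2 :
  Forall (fun b1 => forall a b2, R a b1 -> R a b2 -> b1 = b2) bs1 ->
  Forall2 R l bs1 -> Forall2 R l bs2 -> bs1 = bs2.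
Proof.
move=> hfun h1; elim: h1 bs2 hfun => [|a b1 l' bs1' hab1 _ IH] bs2 hfun h2;
  inversion h2 as [|? b2 ? bs2' hab2 h2']; subst => //.
by case/Forall_cons_iff: hfun => hb1 hfun; rewrite (hb1 _ _ hab1 hab2) (IH _ hfun h2').
Qed.

Section GameTrees.
Variable g : game.

Lemma game_tree_unique p t1 t2 : game_tree g p t1 -> game_tree g p t2 -> t1 = t2.
Proof.
elim/gtree_forall_ind: t1 p t2 => ts1 IH p t2 h1 h2.
inversion h1 as [? ? hts1]; inversion h2 as [? ts2 hts2]; subst.
by rewrite (Forall2_functional IH hts1 hts2).
Qed.

Lemma game_tree_move p q tp tq :
  game_tree g p tp -> q \in g p -> game_tree g q tq -> height tq < height tp.
Proof.
case=> {}p ts hts hq htq.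
have [c hc hqc] : exists2 c, In c ts & game_tree g q c.
  elim: hts hq => //= q' c qs cs hqc _ IH; rewrite inE => /orP[/eqP -> | /IH[c' hc' hqc']].
  - by exists c; first left.
  - by exists c'; first right.
by rewrite (game_tree_unique htq hqc); apply: height_child.
Qed.

Lemma distinct_pos_neq p q : distinct_pos g p q -> p <> q.
Proof.
case=> tp [tq [hp [hq niso]]] epq; subst q.
by apply: niso; rewrite (game_tree_unique hp hq); apply: tiso_refl.
Qed.

Lemma distinct_family_uniq p s : distinct_family g p s -> uniq s.
Proof.
case=> _ hdist; apply: contraT => /(uniqPn [::])[i [j [ltij ltjs eqij]]].
by case: (distinct_pos_neq (hdist _ _ ltij ltjs) eqij).
Qed.

Lemma reachable_invariant (P : seq nat -> Prop) p q :
  P p -> (forall a b, P a -> b \in g a -> P b) -> reachable g p q -> P q.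
Proof.
move=> hp hstep /(clos_rt_rtn1 _ _ _ _) hpq.
by elim: hpq => // a b hab _ ha; apply: hstep hab.
Qed.

Lemma ssc_le_cover p (c : seq (seq nat)) :
  (forall q, reachable g p q -> q \in c) -> ssc_le g p (size c).
Proof.
move=> hc s hs; apply: uniq_leq_size (distinct_family_uniq hs) _ => q hq.
by apply/hc/hs.1.
Qed.

Variable weight : seq nat -> nat.
Hypothesis weight_move : forall p q, q \in g p -> weight q < weight p.

Fixpoint unfold_game (fuel : nat) (p : seq nat) : gtree :=
  if fuel is fuel'.+1 then Node (map (unfold_game fuel') (g p)) else Node [::].

Definition tree_of p := unfold_game (weight p).+1 p.

Lemma game_tree_unfold fuel p : weight p < fuel -> game_tree g p (unfold_game fuel p).
Proof.
elim: fuel p => // fuel IH p ltp /=; constructor.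
have : {in g p, forall q, weight q < fuel} by move=> q /weight_move; lia.
elim: (g p) => //= q qs IHqs hqs; constructor.
- by apply: IH; apply: hqs; rewrite inE eqxx.
- by apply: IHqs => q' hq'; apply: hqs; rewrite inE hq' orbT.
Qed.

Lemma game_tree_of p : game_tree g p (tree_of p).
Proof. exact: game_tree_unfold. Qed.

Lemma height_tree_of_move p q : q \in g p -> height (tree_of q) < height (tree_of p).
Proof. by move=> hq; apply: game_tree_move (game_tree_of p) hq (game_tree_of q). Qed.

Lemma ssc_ge_chain (f : nat -> seq nat) k :
  (forall t, t.+1 < k -> f t.+1 \in g (f t)) -> ssc_ge g (f 0) k.
Proof.
move=> hf; exists (mkseq f k); rewrite size_mkseq; split=> //; split.
  move=> q /mapP[t]; rewrite mem_iota add0n => /andP[_ ltk] ->.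
  elim: t ltk => [|t IH] ltk; first exact: rt_refl.
  exact: rt_trans (IH (ltnW ltk)) (rt_step _ _ _ _ (hf t ltk)).
move=> i j ltij; rewrite size_mkseq => ltjk; have ltik := ltn_trans ltij ltjk.
rewrite !nth_mkseq //; exists (tree_of (f i)), (tree_of (f j)).
split; [exact: game_tree_of | split; [exact: game_tree_of |]].
suff : height (tree_of (f j)) < height (tree_of (f i)) by move=> lt_h /tiso_height; lia.
apply: (@homo_ltn_in _ [pred t | t < k] (fun t => height (tree_of (f t)))
          (fun a b => b < a)); rewrite ?inE //.
- by move=> ? ? ? ? ?; lia.
- by move=> a b _; rewrite !inE => ltbk m /andP[_ ltmb]; rewrite inE; lia.
- by move=> t _ ltk; apply/height_tree_of_move/hf.
Qed.

End GameTrees.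

Lemma psh_pos i j l : all (fun x => 0 < x) (psh i j l).
Proof. exact: filter_all. Qed.

Lemma psh0 l : all (fun x => 0 < x) l -> psh 0 0 l = l.
Proof. by rewrite /psh drop0 (eq_map (g := id) subn0) map_id => /all_filterP. Qed.

Lemma drop_succ_behead (T : Type) n (s : seq T) : drop n.+1 s = behead (drop n s).
Proof. by rewrite -drop1 drop_drop add1n. Qed.

Lemma psh10_behead u : all (fun x => 0 < x) u -> psh 1 0 u = behead u.
Proof. by case: u => //= x u /andP[_ pos_u]; rewrite -{2}(psh0 pos_u). Qed.

Lemma psh_psh01 i j l : psh 0 1 (psh i j l) = psh i j.+1 l.
Proof.
rewrite /psh drop0; elim: (drop i l) => //= x s IH.
have -> : x - j.+1 = x - j - 1 by lia.
by case: ifP => //= hj; rewrite IH // ifF //; lia.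
Qed.

Lemma sorted_geq_head s : sorted geq s -> all (fun y => y <= head 0 s) s.
Proof. by case: s => //= x s srt; rewrite leqnn; apply: order_path_min (rev_trans leq_trans) srt. Qed.

Lemma filter_subn_nil j s :
  all (fun y => y <= j) s -> filter (fun x => 0 < x) (map (fun x => x - j) s) = [::].
Proof. by elim: s => //= y s IH /andP[le_yj /IH ->]; rewrite subn_gt0 ltnNge le_yj. Qed.

Lemma psh_eq_nil i j l : sorted geq l -> nth 0 l i <= j -> psh i j l = [::].
Proof.
move=> /(drop_sorted i)/sorted_geq_head hd le_j; apply: filter_subn_nil.
by apply: sub_all hd => y le_y; apply: leq_trans le_y _; rewrite -nth0 nth_drop addn0.
Qed.

Lemma behead_psh i j l : sorted geq l -> behead (psh i j l) = psh i.+1 j l.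
Proof.
move=> /(drop_sorted i) srt; rewrite /psh drop_succ_behead.
case: (drop i l) srt => //= x s srt; case: ifP => //= /negbT; rewrite -leqNgt => le_x.
rewrite filter_subn_nil //.
by apply: sub_all (order_path_min (rev_trans leq_trans) srt) => y /= le_y; lia.
Qed.

Lemma psh_psh10 i j l : sorted geq l -> psh 1 0 (psh i j l) = psh i.+1 j l.
Proof. by move=> srt; rewrite psh10_behead ?psh_pos // behead_psh. Qed.

Definition cell_positions (l : seq nat) : seq (seq nat) :=
  flatten [seq [seq psh i j l | j <- iota 0 (nth 0 l i)] | i <- iota 0 (size l)].

Lemma size_cell_positions l : size (cell_positions l) = sumn l.
Proof.
rewrite /cell_positions size_flatten /shape -map_comp.
rewrite (eq_map (g := nth 0 l)); first by rewrite -/(mkseq _ _) mkseq_nth.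
by move=> i /=; rewrite size_map size_iota.
Qed.

Lemma mem_cell_positions i j l : j < nth 0 l i -> psh i j l \in cell_positions l.
Proof.
move=> lt_j; have lt_i : i < size l by case: (ltnP i (size l)) lt_j => // /(nth_default 0) ->.
by apply/flattenP; exists [seq psh i j l | j <- iota 0 (nth 0 l i)]; apply: map_f;
  rewrite mem_iota; lia.
Qed.

Definition weight (p : seq nat) := size p + sumn p.

Lemma weight_subn_filter j s :
  weight (filter (fun x => 0 < x) (map (fun x => x - j) s)) <= weight s.
Proof. by rewrite /weight; elim: s => //= x s; case: ifP => /= _; lia. Qed.

Lemma lctr_moves_psh p q : q \in lctr_moves p -> q = psh 1 0 p \/ q = psh 0 1 p.
Proof. by case: p => //= x p; rewrite !inE => /orP[] /eqP; [left | right]. Qed.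

Lemma lctr_move10 x p : psh 1 0 (x :: p) \in lctr_moves (x :: p).
Proof. by rewrite inE eqxx. Qed.

Lemma lctr_move01 x p : psh 0 1 (x :: p) \in lctr_moves (x :: p).
Proof. by rewrite !inE eqxx orbT. Qed.

Lemma downright_move10 p : 1 < size p -> psh 1 0 p \in downright_moves p.
Proof. by move=> lt1; rewrite /downright_moves lt1 mem_cat inE eqxx. Qed.

Lemma downright_move01 p : 1 < head 0 p -> psh 0 1 p \in downright_moves p.
Proof. by move=> lt1; rewrite /downright_moves lt1 mem_cat inE eqxx orbT. Qed.

Lemma downright_sub_lctr p : {subset downright_moves p <= lctr_moves p}.
Proof.
case: p => [|x p] q; rewrite /downright_moves //= mem_cat.
by case/orP; case: ifP => // _; rewrite !inE => ->; rewrite ?orbT.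
Qed.

Lemma weight_lctr_move p q : q \in lctr_moves p -> weight q < weight p.
Proof.
case: p => [|x p] //; case/lctr_moves_psh => ->; rewrite /psh /=.
  by rewrite drop0; have := weight_subn_filter 0 p; rewrite /weight /=; lia.
by have := weight_subn_filter 1 p; case: ifP; rewrite /weight /=; lia.
Qed.

Lemma weight_downright_move p q : q \in downright_moves p -> weight q < weight p.
Proof. by move/downright_sub_lctr/weight_lctr_move. Qed.

Lemma downright_move_nonnil p q :
  all (fun x => 0 < x) p -> q \in downright_moves p -> q != [::].
Proof.
move=> pos_p; rewrite mem_cat => /orP[]; case: ifP => // lt1; rewrite inE => /eqP ->.
  by rewrite psh10_behead //; case: p lt1 {pos_p} => [|x [|y r]].
by case: p lt1 {pos_p} => [|x r] //= lt1; rewrite /psh /= subn_gt0 lt1.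
Qed.

Lemma lctr_reachable_psh l q : sorted geq l -> all (fun x => 0 < x) l ->
  reachable lctr_moves l q -> exists i j, q = psh i j l.
Proof.
move=> srt pos_l; apply: (reachable_invariant (P := fun q => exists i j, q = psh i j l)).
  by exists 0, 0; rewrite psh0.
move=> _ b [i [j ->]] /lctr_moves_psh[] ->; first by exists i.+1, j; rewrite psh_psh10.
by exists i, j.+1; rewrite psh_psh01.
Qed.

Lemma downright_reachable_lctr p q :
  reachable downright_moves p q -> reachable lctr_moves p q.
Proof.
elim=> [a b /downright_sub_lctr | a | a b c _ hab _ hbc];
  [exact: rt_step | exact: rt_refl | exact: rt_trans hab hbc].
Qed.

Lemma downright_reachable_nonnil l q : l != [::] -> all (fun x => 0 < x) l ->
  reachable downright_moves l q -> q != [::].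
Proof.
move=> l_nonnil pos_l hq.
suff /andP[] : all (fun x => 0 < x) q && (q != [::]) by [].
apply: (reachable_invariant (P := fun q => all (fun x => 0 < x) q && (q != [::])) _ _ hq).
  by rewrite pos_l.
move=> a b /andP[pos_a _] hb; rewrite (downright_move_nonnil pos_a hb) andbT.
by case: (lctr_moves_psh (downright_sub_lctr hb)) => ->; apply: psh_pos.
Qed.

Lemma lctr_ssc_le n l : is_partition n l -> ssc_le lctr_moves l n.+1.
Proof.
case/and3P => srt pos_l /eqP <-.
rewrite -size_cell_positions -[_.+1]/(size ([::] :: cell_positions l)).
apply: ssc_le_cover => q /(lctr_reachable_psh srt pos_l)[i [j ->]].
case: (leqP (nth 0 l i) j) => [/(psh_eq_nil srt) -> | /mem_cell_positions hcell].
  exact: mem_head.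
by rewrite inE hcell orbT.
Qed.

Lemma downright_ssc_le n l : 1 <= n -> is_partition n l -> ssc_le downright_moves l n.
Proof.
move=> n_gt0 /and3P[srt pos_l /eqP sum_l]; rewrite -sum_l -size_cell_positions.
have l_nonnil : l != [::] by move: n_gt0; rewrite -sum_l; case: (l).
apply: ssc_le_cover => q hq.
have := downright_reachable_nonnil l_nonnil pos_l hq.
have [i [j ->]] := lctr_reachable_psh srt pos_l (downright_reachable_lctr hq).
by case: (leqP (nth 0 l i) j) => [/(psh_eq_nil srt) -> | /mem_cell_positions].
Qed.

Lemma ssc_ge_first_row n x l : is_partition n (x :: l) ->
  ssc_ge lctr_moves (x :: l) x.+1 /\ ssc_ge downright_moves (x :: l) x.
Proof.
case/and3P => _ pos_xl _; rewrite -(psh0 pos_xl).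
have psh_row t : t < x -> psh 0 t (x :: l) = (x - t) :: psh 0 t l.
  by move=> lt_t; rewrite /psh /= drop0 subn_gt0 lt_t.
split.
  apply: (ssc_ge_chain weight_lctr_move (f := fun t => psh 0 t (x :: l))) => t lt_t.
  by rewrite -psh_psh01 psh_row //; apply: lctr_move01.
apply: (ssc_ge_chain weight_downright_move (f := fun t => psh 0 t (x :: l))) => t lt_t.
by rewrite -psh_psh01 psh_row; [apply: downright_move01 => /=; lia | lia].
Qed.

Lemma ssc_ge_first_column n l : is_partition n l ->
  ssc_ge lctr_moves l (size l).+1 /\ ssc_ge downright_moves l (size l).
Proof.
case/and3P => _ pos_l _; rewrite -{1 3}(drop0 l).
have psh_column t : psh 1 0 (drop t l) = drop t.+1 l.
  rewrite psh10_behead -?drop_succ_behead //.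
  by apply/allP => y /mem_drop; apply: (allP pos_l).
split.
  apply: (ssc_ge_chain weight_lctr_move (f := fun t => drop t l)) => t lt_t.
  by rewrite -psh_column (drop_nth 0 lt_t); apply: lctr_move10.
apply: (ssc_ge_chain weight_downright_move (f := fun t => drop t l)) => t lt_t.
by rewrite -psh_column; apply: downright_move10; rewrite size_drop; lia.
Qed.

Lemma ssc_ge_leq g p a b : a <= b -> ssc_ge g p b -> ssc_ge g p a.
Proof. by move=> le_ab [s [hs le_b]]; exists s; split=> //; apply: leq_trans le_b. Qed.

Lemma ssc_ge_maxn g p a b : ssc_ge g p a -> ssc_ge g p b -> ssc_ge g p (maxn a b).
Proof. by move=> ha hb; case: leqP. Qed.

Lemma partition_le_sq n x l : is_partition n (x :: l) ->
  n <= maxn (size (x :: l)) x * maxn (size (x :: l)) x.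
Proof.
case/and3P => srt _ /eqP <-.
have sumn_le s : all (fun y => y <= x) s -> sumn s <= size s * x.
  by elim: s => //= y s IH /andP[le_yx /IH]; lia.
apply: leq_trans (sumn_le _ (sorted_geq_head srt)) _.
by rewrite leq_mul ?leq_maxl ?leq_maxr.
Qed.

Lemma sqrt_INR_le n k : n <= k * k -> Rle (sqrt (INR n)) (INR k).
Proof.
move=> le_n; rewrite -(sqrt_square _ (pos_INR k)) -mult_INR.
by apply/sqrt_le_1_alt/le_INR/leP.
Qed.

Theorem mainTheorem20 :
  (forall (n : nat) (lam : seq nat), 1 <= n -> is_partition n lam ->
     ssc_le lctr_moves lam n.+1 /\ ssc_le downright_moves lam n) /\
  (forall n : nat, 1 <= n ->
     ssc_ge lctr_moves [:: n] n.+1 /\ ssc_ge downright_moves [:: n] n) /\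
  (exists C : R, Rlt 0 C /\
     forall (n : nat) (lam : seq nat), 1 <= n -> is_partition n lam ->
       (exists k, Rle (Rmult C (sqrt (INR n))) (INR k) /\ ssc_ge lctr_moves lam k) /\
       (exists k, Rle (Rmult C (sqrt (INR n))) (INR k) /\ ssc_ge downright_moves lam k)).
Proof.
split.
  by move=> n l n_gt0 hl; split; [apply: lctr_ssc_le hl | apply: downright_ssc_le hl].
split.
  by move=> n n_gt0; apply: (ssc_ge_first_row (n := n)); rewrite /is_partition /= n_gt0 addn0 eqxx.
exists R1; split; first exact: Rlt_0_1.
move=> n [|x l] n_gt0 hl; first by case/and3P: hl n_gt0 => _ _ /eqP <-.
set k := maxn (size (x :: l)) x.
have le_k : Rle (Rmult R1 (sqrt (INR n))) (INR k).
  by rewrite Rmult_1_l; apply: sqrt_INR_le; apply: partition_le_sq hl.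
have [row_lctr row_dr] := ssc_ge_first_row hl.
have [col_lctr col_dr] := ssc_ge_first_column hl.
split; exists k; split=> //; apply: ssc_ge_maxn => //.
- exact: ssc_ge_leq (leqnSn _) col_lctr.
- exact: ssc_ge_leq (leqnSn _) row_lctr.
Qed.
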